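(* For every integer $m\ge 0$ and every integer $n\ge 2$, the polynomials $l_n(x,m,s)$ satisfy $$l_n(x,m,s)=x\,l_{n-1}(x,m,s)+s\,\lambda_{n-2}(m)\,l_{n-2}(x,m,s),$$ where $\lambda_0(m)=\frac{2}{m+1}$ and $\lambda_n(m)=\frac{(n+1)(n+2m)}{(n+m)(n+m+1)}$ for $n\ge 1$.
   Context: For an integer $m\ge 0$ and indeterminates $x,s$, define $$l_n(x,m,s)=\sum_{k=0}^{\lfloor n/2\rfloor}\frac{n!}{k!\,(n-2k)!}\,\frac{1}{\prod_{j=1}^{k}(m+n-j)}\,s^k x^{n-2k}\qquad(n\ge 0),$$ with empty products equal to $1$ (so $l_0=1$, $l_1=x$). *)

(* Polynomials in the two indeterminates x, s over Q are
   represented as {poly {poly rat}}: the outer variable 'X is x, and the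
   inner variable, lifted as 'X%:P, is s. *)
From HB Require Import structures.
From mathcomp Require Import all_boot all_order all_algebra.
Set Implicit Arguments. Unset Strict Implicit. Unset Printing Implicit Defensive.
Import Order.TTheory GRing.Theory Num.Theory.
Local Open Scope ring_scope.

Definition sX : {poly {poly rat}} := ('X)%:P.

Definition lcoef (n m k : nat) : rat :=
  (n`!)%:R / ((k`!)%:R * ((n - 2 * k)`!)%:R)
  / \prod_(1 <= j < k.+1) ((m + n - j)%N)%:R.

Definition l (n m : nat) : {poly {poly rat}} :=
  \sum_(0 <= k < (n./2).+1) ((lcoef n m k)%:P%:P * sX ^+ k * 'X ^+ (n - 2 * k)).

Definition lambda (n m : nat) : rat :=
  if n is 0 then 2%:R / (m.+1)%:R
  else ((n.+1)%:R * (n + 2 * m)%:R) / ((n + m)%:R * (n + m).+1%:R).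

(* Let c_N(k) be the coefficient of s^k x^(N-2k) in l_N, extended by 0 for
   2k > N.  Comparing coefficients, the recurrence is c_(n+2)(k+1) =
   c_(n+1)(k+1) + lambda_n c_n(k).  Both c_(n+2)(k+1) and c_(n+1)(k+1) are
   explicit rational multiples of c_n(k) (the denominator of l_N is a falling
   factorial), which reduces the recurrence to the identity
   (n+2)(m+n-k) = (m+n+1)(n-2k) + (n+2m)(k+1). *)

From HB Require Import structures.
From mathcomp Require Import all_boot all_order all_algebra.
From mathcomp Require Import ring zify.
Import GRing.Theory Num.Theory.
Local Open Scope ring_scope.

Ltac solve_natr_neq0 :=
  rewrite -?natrM -?natrD ?nat1r !pnatr_eq0 -?lt0n ?fact_gt0 ?ffact_gt0; lia.

Lemma prod_natr_sub_ffact (a k : nat) :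
  \prod_(1 <= j < k.+1) ((a - j)%N)%:R = (a.-1 ^_ k)%:R :> rat.
Proof.
elim: k => [|k IHk]; first by rewrite big_geq.
by rewrite big_nat_recr //= IHk ffactnSr -natrM subnS predn_sub.
Qed.

Lemma lcoef_ffact (N m k : nat) :
  lcoef N m k = (N`!)%:R / ((k`!)%:R * ((N - 2 * k)`!)%:R * ((m + N).-1 ^_ k)%:R).
Proof. by rewrite /lcoef prod_natr_sub_ffact -mulrA -invfM. Qed.

Definition lc (N m k : nat) : rat := if (2 * k <= N)%N then lcoef N m k else 0.

Lemma lc0 (N m : nat) : lc N m 0 = 1.
Proof.
rewrite /lc muln0 lcoef_ffact subn0 fact0 mul1r mulr1 divff //.
by rewrite pnatr_eq0 -lt0n fact_gt0.
Qed.

Lemma lc_small (N m k : nat) : (N < 2 * k)%N -> lc N m k = 0.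
Proof. by rewrite /lc ltnNge => /negbTE ->. Qed.

Lemma natr_ffact_pred (a k : nat) : (k < a)%N ->
  (a ^_ k)%:R = a%:R * (a.-1 ^_ k)%:R / (a - k)%:R :> rat.
Proof.
move=> lt_ka; have ak_neq0 : (a - k)%:R != 0 :> rat by rewrite pnatr_eq0 subn_eq0 -ltnNge.
by rewrite -natrM -ffactnS ffactnSr natrM mulfK.
Qed.

Lemma lc_ratio_SS (m k n : nat) : (2 * k <= n)%N -> (0 < m + n)%N ->
  lc n.+2 m k.+1 = lc n m k * (n.+2 * n.+1 * (m + n - k))%:R
                              / (k.+1 * (m + n) * (m + n).+1)%:R.
Proof.
move=> le_2k_n mn_gt0; rewrite /lc !ifT; try lia.
have [t def_n] : exists t, n = (2 * k + t)%N by exists (n - 2 * k)%N; lia.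
subst n; rewrite !lcoef_ffact.
have -> : ((2 * k + t).+2 - 2 * k.+1 = t)%N by lia.
have -> : (2 * k + t - 2 * k = t)%N by lia.
have -> : (m + (2 * k + t).+2).-1 = (m + (2 * k + t)).+1 by lia.
rewrite ffactSS natrM (@natr_ffact_pred (m + (2 * k + t)) k); last by lia.
rewrite !factS !natrM; field.
by solve_natr_neq0.
Qed.

Lemma lc_ratio_S (m k n : nat) : (2 * k <= n)%N -> (0 < m + n)%N ->
  lc n.+1 m k.+1 = lc n m k * (n.+1 * (n - 2 * k))%:R / (k.+1 * (m + n))%:R.
Proof.
move=> le_2k_n mn_gt0.
have [t def_n] : exists t, n = (2 * k + t)%N by exists (n - 2 * k)%N; lia.
subst n; case: t le_2k_n mn_gt0 => [|t] le_2k_n mn_gt0.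
  by rewrite lc_small ?addn0 ?subnn ?muln0 ?mulr0 ?mul0r //; lia.
rewrite /lc !ifT ?lcoef_ffact; try lia.
have -> : ((2 * k + t.+1).+1 - 2 * k.+1 = t)%N by lia.
have -> : (2 * k + t.+1 - 2 * k = t.+1)%N by lia.
rewrite !addnS /= ffactnS !factS !natrM; field.
by solve_natr_neq0.
Qed.

Lemma lc_rec (n m k : nat) :
  lc n.+2 m k.+1 = lc n.+1 m k.+1 + lambda n m * lc n m k.
Proof.
have [lt_n_2k|le_2k_n] := ltnP n (2 * k).
  by rewrite !lc_small ?mulr0 ?addr0 //; lia.
case: n le_2k_n => [|n] le_2k_n.
  have -> : k = 0%N by lia.
  rewrite lc0 (@lc_small 1) // /lc /= lcoef_ffact /lambda /= addn2 ffactn1.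
  by rewrite add0r mulr1 !mul1r.
rewrite lc_ratio_SS ?lc_ratio_S; try lia.
have [t def_n] : exists t, n.+1 = (2 * k + t)%N by exists (n.+1 - 2 * k)%N; lia.
rewrite /lambda def_n.
have -> : (m + (2 * k + t) - k = m + k + t)%N by lia.
have -> : (2 * k + t - 2 * k = t)%N by lia.
rewrite !natrM; field.
by solve_natr_neq0.
Qed.

Definition lmono (c : rat) (i j : nat) : {poly {poly rat}} := c%:P%:P * sX ^+ i * 'X ^+ j.

Lemma lmonoD (c d : rat) (i j : nat) : lmono (c + d) i j = lmono c i j + lmono d i j.
Proof. by rewrite /lmono !polyCD !mulrDl. Qed.

Lemma mul_sX_lmono (c d : rat) (i j : nat) :
  sX * d%:P%:P * lmono c i j = lmono (d * c) i.+1 j.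
Proof. by rewrite /lmono !polyCM exprS; ring. Qed.

Lemma mulX_lmono_lc (N m k : nat) :
  'X * lmono (lc N m k) k (N - 2 * k) = lmono (lc N m k) k (N.+1 - 2 * k).
Proof.
have [lt_N_2k|le_2k_N] := ltnP N (2 * k).
  by rewrite lc_small // /lmono !mul0r mulr0.
by rewrite /lmono subSn // exprS; ring.
Qed.

Lemma l_sum_widen (N m M : nat) : (N./2 < M)%N ->
  l N m = \sum_(0 <= k < M) lmono (lc N m k) k (N - 2 * k).
Proof.
move=> lt_half_M; rewrite /l [RHS](big_cat_nat (n := N./2.+1)) //=.
rewrite [X in _ + X]big1_seq ?addr0.
  apply: eq_big_nat => k /andP[_ le_k_half]; rewrite /lc ifT //.
  by rewrite mul2n -geq_half_double -ltnS.
move=> k /andP[_]; rewrite mem_iota => /andP[lt_half_k _].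
by rewrite lc_small ?/lmono ?mul0r // mul2n -ltn_half_double.
Qed.

Theorem mainTheorem3 (m n : nat) : (2 <= n)%N ->
  l n m = 'X * l n.-1 m + sX * (lambda (n - 2) m)%:P%:P * l (n - 2) m.
Proof.
case: n => [|[|n]] // _; rewrite !subSS subn0 /=.
rewrite (@l_sum_widen n.+2 m n.+2) ?(@l_sum_widen n.+1 m n.+2) ?(@l_sum_widen n m n.+1);
  try by rewrite ltn_half_double; lia.
rewrite !mulr_sumr.
under [in X in _ + X]eq_bigr do rewrite mul_sX_lmono.
under [in X in X + _]eq_bigr do rewrite mulX_lmono_lc.
rewrite !(big_nat_recl n.+1 0) // !lc0 -addrA -big_split /=; congr (_ + _).
apply: eq_bigr => k _; rewrite lc_rec lmonoD.
by have -> : (n.+2 - 2 * k.+1 = n - 2 * k)%N by lia.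
Qed.
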